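(* Let $W$ be a $k[G_m]$-module and suppose $0\to U\to M(W)\to V\to0$ is an exact sequence of $\mathrm{FI}_G$-modules in which $U$ is generated in degree $\le m$. Then $U$ and $V$ are both relatively projective.
   Context: Fix a commutative ring $k$ and a group $G$. $\mathrm{FI}_G$ is the category with objects $[n]$ ($n\ge0$) and morphisms $[n]\to[m]$ the pairs $(f,g)$ with $f$ injective and $g:[n]\to G$ a map of sets; composition $(f,g)\circ(f',g')=(f\circ f',h)$, $h(x)=g'(x)\,g(f'(x))$. $G_n=\mathfrak S_n\wr G=\mathrm{Aut}_{\mathrm{FI}_G}([n])$. An $\mathrm{FI}_G$-module is a functor $V:\mathrm{FI}_G\to\mathrm{Mod}_k$. For a $k[G_n]$-module $W$, $M(W)$ is the $\mathrm{FI}_G$-module with $M(W)_p=W\otimes_{k[G_n]}k[\mathrm{Hom}_{\mathrm{FI}_G}([n],[p])]$, morphisms acting by postcomposition; $M(n):=M(k[G_n])$; modules of the form $\bigoplus_n M(W_n)$ are relatively projective. $V$ is generated in degree $\le m$ if there is a surjection $\bigoplus M(n_i)\to V$ with all $n_i\le m$. *)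

From HB Require Import structures.
From mathcomp Require Import all_boot all_order all_algebra.
Set Implicit Arguments. Unset Strict Implicit. Unset Printing Implicit Defensive.
Import GRing.Theory.
Local Open Scope ring_scope.

Section FIG.
Variables (k : comPzRingType) (G : groupType).

Record FIGhom (n p : nat) := FIGHom {
  hf : 'I_n -> 'I_p;
  hg : 'I_n -> G;
  hf_inj : injective hf }.

Definition FIGid (n : nat) : FIGhom n n :=
  @FIGHom n n id (fun _ => 1%g) (@inj_id _).

Definition FIGcomp (n p q : nat) (phi : FIGhom p q) (psi : FIGhom n p) : FIGhom n q :=
  @FIGHom n q (hf phi \o hf psi)
    (fun x => (hg psi x * hg phi (hf psi x))%g)
    (inj_comp (@hf_inj _ _ phi) (@hf_inj _ _ psi)).

(* A k[G_n]-module, G_n = Aut([n]) = Hom([n],[n]) (every endomorphism of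
   [n] in FI_G is an automorphism); left action, product = composition. *)
Record kGmod (n : nat) := KGmod {
  kgV :> lmodType k;
  kgact : FIGhom n n -> kgV -> kgV;
  kgact_lin : forall s, linear (kgact s);
  kgact_id : forall w, kgact (FIGid n) w = w;
  kgact_comp : forall s t w, kgact (FIGcomp s t) w = kgact s (kgact t w) }.

Record FIGmod := FIGMod {
  Vobj :> nat -> lmodType k;
  Vact : forall n p, FIGhom n p -> Vobj n -> Vobj p;
  Vact_lin : forall n p (phi : FIGhom n p), linear (Vact phi);
  Vact_id : forall n x, Vact (FIGid n) x = x;
  Vact_comp : forall n p q (phi : FIGhom p q) (psi : FIGhom n p) x,
      Vact (FIGcomp phi psi) x = Vact phi (Vact psi x) }.

Record FIGnat (U V : FIGmod) := FIGNat {
  nt : forall n, U n -> V n;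
  nt_lin : forall n, linear (@nt n);
  nt_nat : forall n p (phi : FIGhom n p) x,
      nt (Vact phi x) = Vact phi (nt x) }.

(* gamma : W x Hom([n],[p]) -> Z is k-linear in W and k[G_n]-balanced,
   i.e. it is a k[G_n]-balanced map on W x k[Hom([n],[p])] (given on basis). *)
Definition balanced (n p : nat) (W : kGmod n) (Z : lmodType k)
    (gamma : W -> FIGhom n p -> Z) : Prop :=
  (forall h, linear (fun w => gamma w h)) /\
  (forall s w h, gamma (kgact s w) h = gamma w (FIGcomp h s)).

(* (T, beta) is the tensor product W (x)_{k[G_n]} k[Hom([n],[p])]
   (universal balanced map). *)
Definition is_tensor (n p : nat) (W : kGmod n) (T : lmodType k)
    (beta : W -> FIGhom n p -> T) : Prop :=
  balanced beta /\
  forall (Z : lmodType k) (gamma : W -> FIGhom n p -> Z), balanced gamma ->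
    exists t : T -> Z, [/\ linear t,
      (forall w h, t (beta w h) = gamma w h) &
      (forall t' : T -> Z, linear t' ->
         (forall w h, t' (beta w h) = gamma w h) -> t' =1 t)].

(* X is M(W): X_p = W (x)_{k[G_m]} k[Hom([m],[p])] (via beta p), morphisms
   acting by postcomposition. *)
Definition is_M (m : nat) (W : kGmod m) (X : FIGmod)
    (beta : forall p, W -> FIGhom m p -> X p) : Prop :=
  (forall p, is_tensor (beta p)) /\
  (forall p q (phi : FIGhom p q) w h,
      Vact phi (beta p w h) = beta q w (FIGcomp phi h)).

(* V is relatively projective: V is (isomorphic to) a direct sum
   \bigoplus_n M(W_n); degreewise V_p = \bigoplus_n W_n (x) k[Hom([n],[p])]. *)
Definition rel_proj (V : FIGmod) : Prop :=
  exists (Ws : forall n, kGmod n)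
         (beta : forall n p, Ws n -> FIGhom n p -> V p),
  [/\ (forall n p, balanced (beta n p)),
      (forall p (Z : lmodType k) (gamma : forall n, Ws n -> FIGhom n p -> Z),
         (forall n, balanced (gamma n)) ->
         exists t : V p -> Z, [/\ linear t,
           (forall n w h, t (beta n p w h) = gamma n w h) &
           (forall t' : V p -> Z, linear t' ->
              (forall n w h, t' (beta n p w h) = gamma n w h) -> t' =1 t)]) &
      (forall n p q (phi : FIGhom p q) w h,
         Vact phi (beta n p w h) = beta n q w (FIGcomp phi h))].

Definition gen_in_deg_le (V : FIGmod) (m : nat) : Prop :=
  forall p (x : V p),
    exists s : seq {n : nat & (k * FIGhom n p * V n)%type},
      all (fun t => projT1 t <= m)%N s /\
      x = \sum_(t <- s) ((projT2 t).1.1 *: Vact (projT2 t).1.2 (projT2 t).2).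

End FIG.

From HB Require Import structures.
From mathcomp Require Import all_boot all_order all_algebra.
From Stdlib Require Import FunctionalExtensionality ProofIrrelevance ClassicalEpsilon.
Set Implicit Arguments. Unset Strict Implicit. Unset Printing Implicit Defensive.
Import GRing.Theory.
Local Open Scope ring_scope.

(* Every h : [m] -> [p] in FI_G factors uniquely as h = e_S o s, where S is
   the image of h, e_S the increasing embedding onto S with trivial G-labels,
   and s in G_m.  Hence M(W)_p is the direct sum of copies of W indexed by the
   m-subsets S of [p], and a module N that is spanned by N_m and through which
   every balanced map on N_m x Hom([m],[p]) factors is M(N_m).
   Through M(W)_m = W the submodule U_m becomes a G_m-submodule W' of W; since
   U is generated in degree m, all coordinates of an element of U_p lie in W',
   so U = M(W').  Dually V = M(W/W'): a balanced map on V_m, pulled back along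
   the coordinates of M(W), vanishes on U_p and descends to V_p. *)

Section LinearPred.
Variables (k : comPzRingType) (A B : lmodType k) (f : A -> B) (f_lin : linear f).

Lemma linD x y : f (x + y) = f x + f y.
Proof. by have := f_lin 1 x y; rewrite !scale1r. Qed.

Lemma lin0 : f 0 = 0.
Proof. by apply: (addrI (f 0)); rewrite -linD !addr0. Qed.

Lemma linZ a x : f (a *: x) = a *: f x.
Proof. by have := f_lin a x 0; rewrite !addr0 lin0 addr0. Qed.

Lemma linB x y : f (x - y) = f x - f y.
Proof. by rewrite linD -scaleN1r linZ scaleN1r. Qed.

Lemma lin_sum (I : Type) (r : seq I) (F : I -> A) :
  f (\sum_(i <- r) F i) = \sum_(i <- r) f (F i).
Proof. by elim: r => [|a r IH]; rewrite ?big_nil ?lin0 // !big_cons linD IH. Qed.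

End LinearPred.

Section FIGhomTheory.
Variable G : groupType.

Lemma FIGhom_eq n p (a b : FIGhom G n p) :
  hf a =1 hf b -> hg a =1 hg b -> a = b.
Proof.
case: a b => fa ga ia [fb gb ib] /= /functional_extensionality ef
  /functional_extensionality eg.
by subst; f_equal; apply: proof_irrelevance.
Qed.

Lemma FIGcomp_id_r n p (h : FIGhom G n p) : FIGcomp h (FIGid G n) = h.
Proof. by apply: FIGhom_eq => x //=; rewrite mul1g. Qed.

Lemma FIGcomp_id_l n p (h : FIGhom G n p) : FIGcomp (FIGid G p) h = h.
Proof. by apply: FIGhom_eq => x //=; rewrite mulg1. Qed.

End FIGhomTheory.

Section ImageFactorization.
Variables (G : groupType) (m : nat).

Definition msub p := {S : {set 'I_p} | #|S| == m}.

Definition std_emb p (S : msub p) : FIGhom G m p.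
Proof.
refine (@FIGHom _ m p (fun i => enum_val (cast_ord (esym (eqP (valP S))) i))
  (fun _ => 1%g) _).
by move=> x y /enum_val_inj /cast_ord_inj.
Defined.

Definition FIGimage p (h : FIGhom G m p) : {set 'I_p} := [set hf h x | x : 'I_m].

Lemma card_FIGimage p (h : FIGhom G m p) : #|FIGimage h| == m.
Proof. by rewrite card_imset ?card_ord //; apply: hf_inj. Qed.

Definition image_msub p (h : FIGhom G m p) : msub p :=
  exist _ (FIGimage h) (card_FIGimage h).

Lemma mem_enum_FIGimage p (h : FIGhom G m p) x : hf h x \in enum (FIGimage h).
Proof. by rewrite mem_enum; apply: imset_f. Qed.

Lemma index_FIGimage_lt p (h : FIGhom G m p) x :
  (index (hf h x) (enum (FIGimage h)) < m)%N.
Proof.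
have size_enum : size (enum (FIGimage h)) = m by rewrite -cardE (eqP (card_FIGimage h)).
by rewrite -[X in (_ < X)%N]size_enum index_mem mem_enum_FIGimage.
Qed.

(* The G_m-part s of h = e_S o s: s x is the position of h x in the increasing
   enumeration of the image S of h. *)
Definition std_factor p (h : FIGhom G m p) : FIGhom G m m.
Proof.
refine (@FIGHom _ m m
  (fun x => insubd x (index (hf h x) (enum (FIGimage h)))) (hg h) _).
move=> x y /(congr1 val); rewrite !val_insubd !index_FIGimage_lt => E.
apply: (@hf_inj _ _ _ h).
by rewrite -(nth_index (hf h x) (mem_enum_FIGimage h x)) E nth_index
  ?mem_enum_FIGimage.
Defined.

Lemma val_std_factor p (h : FIGhom G m p) x :
  val (hf (std_factor h) x) = index (hf h x) (enum (FIGimage h)).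
Proof. by rewrite /= val_insubd index_FIGimage_lt. Qed.

Lemma std_emb_factor p (h : FIGhom G m p) :
  FIGcomp (std_emb (image_msub h)) (std_factor h) = h.
Proof.
apply: FIGhom_eq => x /=; last by rewrite mulg1.
by rewrite (enum_val_nth (hf h x)) /= val_insubd index_FIGimage_lt nth_index
  ?mem_enum_FIGimage.
Qed.

Lemma FIGimage_comp p (h : FIGhom G m p) (s : FIGhom G m m) :
  FIGimage (FIGcomp h s) = FIGimage h.
Proof.
apply/eqP; rewrite eqEcard (eqP (card_FIGimage h)) (eqP (card_FIGimage _)).
by rewrite leqnn andbT; apply/subsetP => y /imsetP [x _ ->]; apply: imset_f.
Qed.

Lemma image_msub_comp p (h : FIGhom G m p) (s : FIGhom G m m) :
  image_msub (FIGcomp h s) = image_msub h.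
Proof. by apply: val_inj; rewrite /= FIGimage_comp. Qed.

Lemma std_factor_comp p (h : FIGhom G m p) (s : FIGhom G m m) :
  std_factor (FIGcomp h s) = FIGcomp (std_factor h) s.
Proof.
apply: FIGhom_eq => x //=; apply: val_inj.
by rewrite -/(hf (std_factor _) x) !val_std_factor /= FIGimage_comp.
Qed.

Lemma msub0 p : (p < m)%N -> msub p -> False.
Proof.
by move=> lt_pm [S /eqP cardS]; move: (max_card S); rewrite cardS card_ord leqNgt lt_pm.
Qed.

End ImageFactorization.
Arguments std_emb {G m p}.

Section FreeOnDegree.
Variables (k : comPzRingType) (G : groupType) (m : nat).

Lemma ord_bool_eq (b : bool) (j j' : 'I_b) : j = j'.
Proof.
apply: val_inj; case: j j' => [a lt_ab] [c lt_cb] /=.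
by case: b lt_ab lt_cb => //; case: a => //; case: c.
Qed.

(* M_n if b, the zero module otherwise; [n |-> kGmod_if M n (n == m)] is the
   family of coefficient modules concentrated in degree m. *)
Definition kGmod_if (M : FIGmod k G) n (b : bool) : kGmod k G n.
Proof.
refine (@KGmod k G n {ffun 'I_b -> M n} (fun s f => [ffun j => Vact s (f j)]) _ _ _).
- by move=> s a u v; apply/ffunP => j; rewrite !ffunE Vact_lin.
- by move=> w; apply/ffunP => j; rewrite ffunE Vact_id.
- by move=> s t w; apply/ffunP => j; rewrite !ffunE Vact_comp.
Defined.

Definition top_kGmod (M : FIGmod k G) := kGmod_if M m (m == m).

Definition generated_in_deg_eq (M : FIGmod k G) :=
  forall p (x : M p), exists s : seq (k * FIGhom G m p * M m),
    x = \sum_(t <- s) t.1.1 *: Vact t.1.2 t.2.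

Definition balanced_descends (M : FIGmod k G) :=
  forall p (Z : lmodType k) (gamma : top_kGmod M -> FIGhom G m p -> Z),
    balanced gamma ->
    exists t : M p -> Z, linear t /\ forall u h, t (Vact h u) = gamma [ffun=> u] h.

Lemma rel_proj_of_descends (M : FIGmod k G) :
  generated_in_deg_eq M -> balanced_descends M -> rel_proj M.
Proof.
move=> M_gen M_descends.
exists (fun n => kGmod_if M n (n == m)).
exists (fun n p (f : kGmod_if M n (n == m)) h => \sum_(j < (n == m)) Vact h (f j)).
have jm : 'I_(m == m) by exists 0%N; rewrite eqxx.
have sum_top p u (h : FIGhom G m p) :
    \sum_(j < (m == m)) Vact h ([ffun=> u] j) = Vact h u.
  by rewrite (bigD1 jm) //= big1 ?addr0 ?ffunE // => j /eqP[]; apply: ord_bool_eq.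
split.
- move=> n p; split=> [h a u v|s w h].
    by rewrite scaler_sumr -big_split; apply: eq_bigr => j _; rewrite !ffunE Vact_lin.
  by apply: eq_bigr => j _; rewrite ffunE Vact_comp.
- move=> p Z gamma gamma_bal.
  have [t [t_lin t_Vact]] := M_descends p Z (gamma m) (gamma_bal m).
  exists t; split=> // [n f h|t' t'_lin t'_beta x].
    change {ffun 'I_(n == m) -> M n} in f.
    have [eq_nm|ne_nm] : n = m \/ n != m by case: eqP; [left|right].
      subst n; have -> : f = [ffun=> f jm].
        by apply/ffunP => j; rewrite ffunE (ord_bool_eq j jm).
      by rewrite sum_top t_Vact.
    have no_j : 'I_(n == m) -> False by case=> j; rewrite (negbTE ne_nm).
    have -> : f = 0 by apply/ffunP => j; case: (no_j j).
    by rewrite big1 ?(lin0 t_lin) ?(lin0 ((gamma_bal n).1 h)) // => j; case: (no_j j).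
  have [s ->] := M_gen p x.
  rewrite (lin_sum t'_lin) (lin_sum t_lin); apply: eq_bigr => -[[c h] u] _ /=.
  by rewrite (linZ t'_lin) (linZ t_lin) t_Vact -(t'_beta m [ffun=> u] h) sum_top.
- move=> n p q phi w h; rewrite (lin_sum (Vact_lin phi)).
  by apply: eq_bigr => j _; rewrite Vact_comp.
Qed.

End FreeOnDegree.

Section InducedModule.
Variables (k : comPzRingType) (G : groupType) (m : nat) (W : kGmod k G m).
Variable X : FIGmod k G.
Variable beta : forall p, W -> FIGhom G m p -> X p.
Arguments beta : clear implicits.
Hypothesis X_induced : is_M beta.

Let beta_balanced p : balanced (beta p) := (X_induced.1 p).1.
Let beta_universal p := (X_induced.1 p).2.

Lemma Mcoord_exists p : exists coord : X p -> {ffun msub m p -> kgV W},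
  [/\ linear coord,
      forall w h, coord (beta p w h) =
        [ffun S => if S == image_msub h then kgact (std_factor h) w else 0] &
      forall x, x = \sum_(S : msub m p) beta p (coord x S) (std_emb S)].
Proof.
pose gamma w (h : FIGhom G m p) : {ffun msub m p -> kgV W} :=
  [ffun S => if S == image_msub h then kgact (std_factor h) w else 0].
have gamma_balanced : balanced gamma.
  split=> [h a u v|s w h]; apply/ffunP => S; rewrite !ffunE.
    by case: ifP => _; rewrite ?kgact_lin // scaler0 addr0.
  by rewrite image_msub_comp std_factor_comp kgact_comp.
have [coord [coord_lin coord_beta _]] := beta_universal gamma_balanced.
exists coord; split=> //.
pose recompose x := \sum_(S : msub m p) beta p (coord x S) (std_emb S).
have recompose_lin : linear recompose.
  move=> a x y; rewrite /recompose coord_lin scaler_sumr -big_split /=.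
  by apply: eq_bigr => S _; rewrite !ffunE (beta_balanced p).1.
(* Both the identity and [recompose] extend [beta p]; conclude by uniqueness. *)
have [t [_ _ t_unique]] := beta_universal (beta_balanced p).
have id_t := t_unique id (fun a x y => erefl) (fun w h => erefl).
suff recompose_beta w h : recompose (beta p w h) = beta p w h.
  by move=> x; rewrite [LHS]id_t -(t_unique _ recompose_lin recompose_beta x).
rewrite /recompose coord_beta (bigD1 (image_msub h)) //= ffunE eqxx big1.
  by rewrite addr0 (beta_balanced p).2 std_emb_factor.
by move=> S /negbTE nS; rewrite ffunE nS (lin0 ((beta_balanced p).1 _)).
Qed.

Definition Mcoord p : X p -> {ffun msub m p -> kgV W} :=
  proj1_sig (constructive_indefinite_description _ (Mcoord_exists p)).

Let Mcoord_spec p :=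
  proj2_sig (constructive_indefinite_description _ (Mcoord_exists p)).

Lemma Mcoord_linear p : linear (@Mcoord p).
Proof. by case: (Mcoord_spec p). Qed.

Lemma Mcoord_beta p w h : Mcoord (beta p w h) =
  [ffun S => if S == image_msub h then kgact (std_factor h) w else 0].
Proof. by case: (Mcoord_spec p) => _ coord_beta _; apply: coord_beta. Qed.

Lemma Mcoord_sum p (x : X p) :
  x = \sum_(S : msub m p) beta p (Mcoord x S) (std_emb S).
Proof. by case: (Mcoord_spec p) => _ _ coord_sum; apply: coord_sum. Qed.

Lemma M_vanish_below n (x : X n) : (n < m)%N -> x = 0.
Proof.
by move=> lt_nm; rewrite (Mcoord_sum x) big_pred0 // => S; case: (msub0 lt_nm S).
Qed.

Definition Mgen (w : W) : X m := beta m w (FIGid G m).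

Lemma Mgen_linear : linear Mgen.
Proof. by move=> a u v; rewrite /Mgen (beta_balanced m).1. Qed.

Lemma beta_Mgen p w h : beta p w h = Vact h (Mgen w).
Proof. by rewrite /Mgen X_induced.2 FIGcomp_id_r. Qed.

Lemma Mgen_kgact w s : Mgen (kgact s w) = Vact s (Mgen w).
Proof. by rewrite /Mgen (beta_balanced m).2 FIGcomp_id_l beta_Mgen. Qed.

Lemma Mgen_surj (x : X m) : exists w, x = Mgen w.
Proof.
exists (\sum_(S : msub m m) kgact (std_emb S) (Mcoord x S)).
rewrite (lin_sum Mgen_linear) {1}(Mcoord_sum x); apply: eq_bigr => S _.
by rewrite Mgen_kgact beta_Mgen.
Qed.

Lemma sum_coord_beta (M : FIGmod k G) p (Z : lmodType k)
    (gamma : top_kGmod m M -> FIGhom G m p -> Z) (c : W -> M m) w h :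
  balanced gamma -> c 0 = 0 ->
  c (kgact (std_factor h) w) = Vact (std_factor h) (c w) ->
  \sum_(S : msub m p) gamma [ffun=> c (Mcoord (beta p w h) S)] (std_emb S) =
  gamma [ffun=> c w] h.
Proof.
move=> gamma_bal c0 c_kgact.
rewrite (bigD1 (image_msub h)) //= big1 => [|S /negbTE nS].
  rewrite Mcoord_beta ffunE (eqxx (image_msub h)) c_kgact addr0.
  have -> : [ffun=> Vact (std_factor h) (c w)] =
      kgact (std_factor h) ([ffun=> c w] : top_kGmod m M).
    by apply/ffunP => j; rewrite !ffunE.
  by rewrite gamma_bal.2 std_emb_factor.
rewrite Mcoord_beta ffunE nS c0.
have -> : [ffun=> (0 : M m)] = 0 :> top_kGmod m M by apply/ffunP => j; rewrite !ffunE.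
exact: (lin0 (gamma_bal.1 _)).
Qed.

End InducedModule.

Section ExactSequence.
Variables (k : comPzRingType) (G : groupType) (m : nat) (W : kGmod k G m).
Variable X : FIGmod k G.
Variable beta : forall p, W -> FIGhom G m p -> X p.
Arguments beta : clear implicits.
Hypothesis X_induced : is_M beta.
Variables (U V : FIGmod k G) (i : FIGnat U X) (pi : FIGnat X V).
Local Unset Implicit Arguments.
Hypothesis i_inj : forall p, injective (@nt _ _ _ _ i p).
Hypothesis pi_surj : forall p (y : V p), exists x : X p, nt pi x = y.
Hypothesis exact_at_X :
  forall p (x : X p), nt pi x = 0 <-> exists u : U p, nt i u = x.
Hypothesis U_gen : gen_in_deg_le U m.
Local Notation coord := (Mcoord X_induced).
Local Notation gen := (Mgen beta).
Let coord_lin p : linear (@coord p) := Mcoord_linear X_induced (p:=p).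
Let gen_lin : linear gen := Mgen_linear X_induced.
Let i_lin p : linear (@nt _ _ _ _ i p) := @nt_lin _ _ _ _ i p.
Let pi_lin p : linear (@nt _ _ _ _ pi p) := @nt_lin _ _ _ _ pi p.
Local Set Implicit Arguments.


Lemma U_vanish_below n (u : U n) : (n < m)%N -> u = 0.
Proof.
move=> lt_nm; apply: (i_inj n); rewrite (lin0 (i_lin n)).
exact: (M_vanish_below X_induced).
Qed.

Lemma U_generated : generated_in_deg_eq m U.
Proof.
move=> p x; have [s [s_le ->]] := U_gen p x.
elim: s s_le => [|[n [[c h] y]] s IH] /=; first by exists [::]; rewrite !big_nil.
rewrite big_cons /= => /andP [le_nm /IH [s' ->]].
have [lt_nm|] := ltnP n m.
  by exists s'; rewrite (U_vanish_below y lt_nm) (lin0 (Vact_lin h)) scaler0 add0r.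
move=> le_mn; have eq_nm : n = m by apply/eqP; rewrite eqn_leq le_nm le_mn.
by subst n; exists ((c, h, y) :: s'); rewrite big_cons.
Qed.

(* The G_m-submodule W' of W corresponding to U_m under W = M(W)_m. *)
Definition inU (w : W) := exists u : U m, nt i u = gen w.

Lemma inU0 : inU 0.
Proof. by exists 0; rewrite (lin0 (i_lin m)) (lin0 gen_lin). Qed.

Lemma inUD w w' : inU w -> inU w' -> inU (w + w').
Proof.
move=> [u iu] [u' iu']; exists (u + u').
by rewrite (linD (i_lin m)) (linD gen_lin) iu iu'.
Qed.

Lemma inUZ a w : inU w -> inU (a *: w).
Proof.
by move=> [u iu]; exists (a *: u); rewrite (linZ (i_lin m)) (linZ gen_lin) iu.
Qed.

Lemma coord_inU p (u : U p) S : inU (coord (nt i u) S).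
Proof.
have [s [s_le ->]] := U_gen p u.
rewrite (lin_sum (i_lin p)) (lin_sum (coord_lin p)) sum_ffunE.
elim: s s_le => [|[n [[c h] y]] s IH]; first by rewrite big_nil => _; exact: inU0.
rewrite big_cons /= => /andP [le_nm s_le]; apply: inUD (IH s_le).
rewrite (linZ (i_lin p)) (linZ (coord_lin p)) ffunE; apply: inUZ.
have [lt_nm|le_mn] := ltnP n m.
  rewrite (U_vanish_below y lt_nm) (lin0 (Vact_lin h)) (lin0 (i_lin p)).
  by rewrite (lin0 (coord_lin p)) ffunE; exact: inU0.
have eq_nm : n = m by apply/eqP; rewrite eqn_leq le_nm le_mn.
subst n; have [w iy] := Mgen_surj X_induced (nt i y).
rewrite nt_nat iy -(beta_Mgen X_induced) Mcoord_beta ffunE.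
case: ifP => _; last exact: inU0.
by exists (Vact (std_factor h) y); rewrite nt_nat iy (Mgen_kgact X_induced).
Qed.

(* The inverse of [i] on W'; its values outside W' are irrelevant. *)
Definition liftU (w : W) : U m :=
  epsilon (inhabits (0 : U m)) (fun u => nt i u = gen w).

Lemma liftU_spec w : inU w -> nt i (liftU w) = gen w.
Proof. exact: epsilon_spec. Qed.

Lemma liftU_eq w u : nt i u = gen w -> liftU w = u.
Proof. by move=> iu; apply: (i_inj m); rewrite liftU_spec ?iu //; exists u. Qed.

Lemma liftU0 : liftU 0 = 0.
Proof. by apply: liftU_eq; rewrite (lin0 (i_lin m)) (lin0 gen_lin). Qed.

Lemma liftU_linear a w w' : inU w -> inU w' ->
  liftU (a *: w + w') = a *: liftU w + liftU w'.
Proof.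
move=> Uw Uw'; apply: liftU_eq.
by rewrite (i_lin m) gen_lin !liftU_spec.
Qed.

Lemma liftU_kgact s w : inU w -> liftU (kgact s w) = Vact s (liftU w).
Proof.
by move=> Uw; apply: liftU_eq; rewrite nt_nat liftU_spec // (Mgen_kgact X_induced).
Qed.

Lemma U_balanced_descends : balanced_descends m U.
Proof.
move=> p Z gamma gamma_bal.
exists (fun u =>
  \sum_(S : msub m p) gamma [ffun=> liftU (coord (nt i u) S)] (std_emb S)).
split=> [a u u'|u h].
  rewrite scaler_sumr -big_split /=; apply: eq_bigr => S _.
  rewrite -gamma_bal.1; congr gamma; apply/ffunP => j.
  by rewrite !ffunE (i_lin p) (coord_lin p) !ffunE liftU_linear //; apply: coord_inU.
have [w iu] := Mgen_surj X_induced (nt i u).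
have Uw : inU w by exists u.
rewrite nt_nat iu -(beta_Mgen X_induced) sum_coord_beta ?liftU0 ?liftU_kgact //.
by rewrite (liftU_eq iu).
Qed.

Lemma V_generated : generated_in_deg_eq m V.
Proof.
move=> p y; have [x <-] := pi_surj p y.
exists [seq (1, std_emb A, nt pi (gen (coord x A))) | A <- index_enum (msub m p)].
rewrite big_map {1}(Mcoord_sum X_induced x) (lin_sum (pi_lin p)).
by apply: eq_bigr => S _ /=; rewrite scale1r (beta_Mgen X_induced) nt_nat.
Qed.

Lemma V_balanced_descends : balanced_descends m V.
Proof.
move=> p Z gamma gamma_bal.
pose c w := nt pi (gen w).
pose T x := \sum_(S : msub m p) gamma [ffun=> c (coord x S)] (std_emb S).
have T_lin : linear T.
  move=> a x x'; rewrite scaler_sumr -big_split /=; apply: eq_bigr => S _.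
  rewrite -gamma_bal.1; congr gamma; apply/ffunP => j.
  by rewrite !ffunE (coord_lin p) !ffunE /c gen_lin (pi_lin m).
(* T kills U_p because the coordinates of U_p lie in W' = ker (pi o gen). *)
have T_i u : T (nt i u) = 0.
  rewrite /T big1 // => S _.
  have [u' iu'] := coord_inU u S.
  have -> : [ffun=> c (coord (nt i u) S)] = 0 :> top_kGmod m V.
    by apply/ffunP => j; rewrite !ffunE; apply/exact_at_X; exists u'.
  exact: (lin0 (gamma_bal.1 _)).
have T_pi x x' : nt pi x = nt pi x' -> T x = T x'.
  move=> pix; apply/eqP; rewrite -subr_eq0 -(linB T_lin).
  have : nt pi (x - x') = 0 by rewrite (linB (pi_lin p)) pix subrr.
  by move/exact_at_X => [u <-]; rewrite T_i.
pose lift y := epsilon (inhabits (0 : X p)) (fun x => nt pi x = y).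
have pi_lift y : nt pi (lift y) = y by exact: epsilon_spec (pi_surj p y).
exists (fun y => T (lift y)); split=> [a y y'|v h].
  by rewrite -T_lin; apply: T_pi; rewrite (pi_lin p) !pi_lift.
have [x pix] := pi_surj m v; have [w xw] := Mgen_surj X_induced x.
have <- : c w = v by rewrite /c -xw.
rewrite (T_pi _ (beta p w h)); last by rewrite pi_lift (beta_Mgen X_induced) nt_nat.
apply: sum_coord_beta => //; first by rewrite /c (lin0 gen_lin) (lin0 (pi_lin m)).
by rewrite /c (Mgen_kgact X_induced) nt_nat.
Qed.

End ExactSequence.

Theorem mainTheorem15 (k : comPzRingType) (G : groupType) (m : nat)
  (W : kGmod k G m) (X U V : FIGmod k G)
  (beta : forall p, W -> FIGhom G m p -> X p) (HX : @is_M k G m W X beta)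
  (i : FIGnat U X) (pi : FIGnat X V)
  (Hi : forall p, injective (@nt _ _ _ _ i p))
  (Hpi : forall p (y : V p), exists x : X p, nt pi x = y)
  (Hex : forall p (x : X p), nt pi x = 0 <-> exists u : U p, nt i u = x)
  (HU : gen_in_deg_le U m) :
  rel_proj U /\ rel_proj V.
Proof.
split; apply: rel_proj_of_descends.
- exact (U_generated HX Hi HU).
- exact (U_balanced_descends HX Hi HU).
- exact (V_generated HX Hpi).
- exact (V_balanced_descends HX Hi Hpi Hex HU).
Qed.
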